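(* For every $A\subseteq[n]$, with $$C_A=\sum_{\{i,j\}\subseteq A}\Gamma_{\{i,j\}}\Gamma_{A\setminus\{i,j\}}-(|A|-2)\sum_{i\in A}\mu_i\,\Gamma_{A\setminus\{i\}}$$ (first sum over the 2-element subsets of $A$), one has $$C_A=\frac{|A|(|A|-3)}{4}\,\Gamma_A .$$
   Context: Fix $n\ge1$ and real parameters $\mu_1,\dots,\mu_n>0$; write $[n]=\{1,\dots,n\}$. For $i\in[n]$, $r_i$ is the reflection $(r_if)(x)=f(x_1,\dots,-x_i,\dots,x_n)$ and $T_i=\partial_{x_i}+\frac{\mu_i}{x_i}(1-r_i)$. $\mathcal{C}\ell_n$ is generated by $e_1,\dots,e_n$ with $e_ie_j+e_je_i=-2\delta_{ij}$, $V$ is a fixed left $\mathcal{C}\ell_n$-module, and operators act on $\mathcal{P}(\mathbb{R}^n)\otimes V$ with $x_i,T_i,r_i$ acting on the polynomial factor and $e_i$ on $V$. For $A\subseteq[n]$: $\underline{D}_A=\sum_{i\in A}e_iT_i$, $\underline{x}_A=\sum_{i\in A}e_ix_i$, $\underline{S}_A=\frac12([\underline{x}_A,\underline{D}_A]-1)$, $\Gamma_A=\underline{S}_A\prod_{i\in A}r_i$ (empty sums $0$, empty products $1$). *)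

(* P(R^n) (x) V is represented by coefficient functions:
   an element is F : multi-index -> V, F a = V-coefficient of x^a,
   with finite support (polynomials). *)
From HB Require Import structures.
From mathcomp Require Import all_boot all_order all_algebra.
Set Implicit Arguments. Unset Strict Implicit. Unset Printing Implicit Defensive.
Import Order.TTheory GRing.Theory Num.Theory.
Local Open Scope ring_scope.

Section Dunkl.
Variables (R : realFieldType) (n : nat) (V : lmodType R).
Variable mu : 'I_n -> R.
Variable e : 'I_n -> V -> V.

Definition midx := {ffun 'I_n -> nat}.
Definition PV := midx -> V.

Definition is_poly (F : PV) : Prop :=
  exists N : nat, forall a : midx, (N <= \sum_(i < n) a i)%N -> F a = 0.

Definition upd (i : 'I_n) (a : midx) (k : nat) : midx :=
  [ffun j => if j == i then k else a j].

(* multiplication by x_i *)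
Definition xop (i : 'I_n) (F : PV) : PV :=
  fun a => if (0 < a i)%N then F (upd i a (a i).-1) else 0.
Definition dop (i : 'I_n) (F : PV) : PV :=
  fun a => (a i).+1%:R *: F (upd i a (a i).+1).
Definition rop (i : 'I_n) (F : PV) : PV :=
  fun a => (-1) ^+ (a i) *: F a.
(* division by x_i (exact on the image of 1 - r_i) *)
Definition divx (i : 'I_n) (F : PV) : PV :=
  fun a => F (upd i a (a i).+1).
Definition Top (i : 'I_n) (F : PV) : PV :=
  fun a => dop i F a + mu i *: divx i (fun b => F b - rop i F b) a.
Definition eop (i : 'I_n) (F : PV) : PV := fun a => e i (F a).

Definition DA (A : {set 'I_n}) (F : PV) : PV :=
  fun a => \sum_(i in A) eop i (Top i F) a.
Definition xA (A : {set 'I_n}) (F : PV) : PV :=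
  fun a => \sum_(i in A) eop i (xop i F) a.
Definition SA (A : {set 'I_n}) (F : PV) : PV :=
  fun a => 2^-1 *: (xA A (DA A F) a - DA A (xA A F) a - F a).
Definition rA (A : {set 'I_n}) (F : PV) : PV :=
  fun a => (-1) ^+ (\sum_(i in A) a i) *: F a.
Definition GammaA (A : {set 'I_n}) (F : PV) : PV := SA A (rA A F).

Definition CA (A : {set 'I_n}) (F : PV) : PV :=
  fun a =>
    \sum_(i in A) \sum_(j in A | (i < j)%N)
        GammaA [set i; j] (GammaA (A :\ i :\ j) F) a
    - (#|A|%:R - 2) *: \sum_(i in A) (mu i *: GammaA (A :\ i) F a).
End Dunkl.

(** Put [G = r_A F]. Reflections [r_i] with [i ∉ B] commute with [S_B], and
    [r_{i,j} r_{A∖{i,j}} = r_A], [r_{A∖i} = r_i r_A]; hence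
    [Γ_{i,j} Γ_{A∖{i,j}} F = S_{i,j} S_{A∖{i,j}} G] and
    [μ_i Γ_{A∖i} F = μ_i r_i S_{A∖i} G].  From [[T_k, x_k] = 1 + 2 μ_k r_k],
    [[T_l, x_k] = 0] for [k ≠ l] and the Clifford relations one gets
    [S_B = (|B| - 1)/2 + Σ_{k ∈ B} μ_k r_k + Σ_{k ≠ l ∈ B} e_k e_l x_k T_l].
    Expanding with this formula, every term of [C_A F] and of [Γ_A F] becomes a
    combination of the five vectors [G], [Σ_k μ_k r_k G],
    [Σ_{k≠l} e_k e_l x_k T_l G], [Σ_{i≠k} μ_i r_i μ_k r_k G] and
    [Σ_i μ_i r_i Σ_{k≠l, k,l ≠ i} e_k e_l x_k T_l G]; the quartic terms
    [e_i e_j x_i T_j e_k e_l x_k T_l G] cancel in pairs because they are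
    antisymmetric in [(i, k)], and comparing the five coefficients is a
    polynomial identity in [|A|]. *)

From Pilot Require Import Defs.
From HB Require Import structures.
From mathcomp Require Import all_boot all_order all_algebra.
From mathcomp Require Import ring.
From Stdlib Require Import FunctionalExtensionality.
Set Implicit Arguments. Unset Strict Implicit. Unset Printing Implicit Defensive.
Import Order.TTheory GRing.Theory Num.Theory.
Local Open Scope ring_scope.

Section SetD1Sums.
Variables (T : finType) (R : numFieldType) (U : lmodType R).

Lemma setD1C (A : {set T}) i j : A :\ i :\ j = A :\ j :\ i.
Proof. by apply/setP => x; rewrite !in_setD1 andbCA. Qed.

Lemma natr_cardsD1 (B : {set T}) k : k \in B -> #|B :\ k|%:R = #|B|%:R - 1 :> R.
Proof. by move=> kB; rewrite [in RHS](cardsD1 k B) kB natrD addrAC subrr add0r. Qed.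

Lemma sum_setD1_swap (B : {set T}) (F : T -> T -> U) :
  \sum_(i in B) \sum_(j in B :\ i) F i j = \sum_(i in B) \sum_(j in B :\ i) F j i.
Proof.
rewrite (exchange_big_dep (fun j => j \in B)) /=; last first.
  by move=> i j _; rewrite in_setD1 => /andP [].
apply: eq_bigr => j jB; apply: eq_bigl => i.
by rewrite !in_setD1 jB andbT andbC eq_sym.
Qed.

Lemma sum_setD2_swap (A : {set T}) (W : T -> T -> {set T} -> U) :
  \sum_(i in A) \sum_(j in A :\ i) W j i (A :\ i :\ j) =
  \sum_(i in A) \sum_(j in A :\ i) W i j (A :\ i :\ j).
Proof.
rewrite (sum_setD1_swap _ (fun i j => W j i (A :\ i :\ j))).
by apply: eq_bigr => i _; apply: eq_bigr => j _; rewrite setD1C.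
Qed.

Lemma sum_setD1_const (B : {set T}) (f : T -> U) :
  \sum_(j in B) \sum_(k in B :\ j) f k = (#|B|%:R - 1) *: \sum_(k in B) f k.
Proof.
rewrite (exchange_big_dep (fun j => j \in B)) /=; last first.
  by move=> i j _; rewrite in_setD1 => /andP [].
rewrite scaler_sumr; apply: eq_bigr => k kB.
rewrite (eq_bigl (fun j => j \in B :\ k)); last first.
  by move=> j; rewrite !in_setD1 kB andbT andbC eq_sym.
by rewrite sumr_const -scaler_nat natr_cardsD1.
Qed.

Lemma sum_setD2_const (B : {set T}) (g : T -> T -> U) :
  \sum_(j in B) \sum_(k in B :\ j) \sum_(l in B :\ j :\ k) g k l =
  (#|B|%:R - 2) *: \sum_(k in B) \sum_(l in B :\ k) g k l.
Proof.
rewrite (sum_setD1_swap _ (fun j k => \sum_(l in B :\ j :\ k) g k l)) scaler_sumr.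
apply: eq_bigr => k kB.
under eq_bigr => j _ do rewrite setD1C.
by rewrite sum_setD1_const natr_cardsD1 // -addrA -opprD.
Qed.

End SetD1Sums.

Section LinearCombination5.
Variables (R : pzRingType) (U : lmodType R).

Definition lincomb5 (v1 v2 v3 v4 v5 : U) (c1 c2 c3 c4 c5 : R) : U :=
  c1 *: v1 + c2 *: v2 + c3 *: v3 + c4 *: v4 + c5 *: v5.

Lemma lincomb5D v1 v2 v3 v4 v5 a1 a2 a3 a4 a5 b1 b2 b3 b4 b5 :
  lincomb5 v1 v2 v3 v4 v5 a1 a2 a3 a4 a5 + lincomb5 v1 v2 v3 v4 v5 b1 b2 b3 b4 b5 =
  lincomb5 v1 v2 v3 v4 v5 (a1 + b1) (a2 + b2) (a3 + b3) (a4 + b4) (a5 + b5).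
Proof.
rewrite /lincomb5 !scalerDl.
rewrite [in LHS]addrACA [X in X + _ = _]addrACA [X in X + _ + _ = _]addrACA.
by rewrite [X in X + _ + _ + _ = _]addrACA.
Qed.

Lemma lincomb5Z v1 v2 v3 v4 v5 a1 a2 a3 a4 a5 c :
  c *: lincomb5 v1 v2 v3 v4 v5 a1 a2 a3 a4 a5 =
  lincomb5 v1 v2 v3 v4 v5 (c * a1) (c * a2) (c * a3) (c * a4) (c * a5).
Proof. by rewrite /lincomb5 !scalerDr !scalerA. Qed.

Lemma lincomb5N v1 v2 v3 v4 v5 a1 a2 a3 a4 a5 :
  - lincomb5 v1 v2 v3 v4 v5 a1 a2 a3 a4 a5 =
  lincomb5 v1 v2 v3 v4 v5 (- a1) (- a2) (- a3) (- a4) (- a5).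
Proof. by rewrite /lincomb5 !opprD !scaleNr. Qed.

End LinearCombination5.

Lemma sum_ord_pairs (R : numFieldType) (U : lmodType R) n (A : {set 'I_n})
    (g : 'I_n -> 'I_n -> U) :
  (forall i j, g i j = g j i) ->
  \sum_(i in A) \sum_(j in A | (i < j)%N) g i j
  = 2^-1 *: \sum_(i in A) \sum_(j in A :\ i) g i j.
Proof.
move=> g_sym; set X := \sum_(i in A) _.
have X_gt : X = \sum_(i in A) \sum_(j in A | (j < i)%N) g i j.
  rewrite /X (exchange_big_dep (fun j => j \in A)) /=; last by move=> i j _ /andP [].
  apply: eq_bigr => j jA; rewrite (eq_bigl (fun i => (i \in A) && (i < j)%N)).
    by apply: eq_bigr => i _; rewrite g_sym.
  by move=> i; rewrite jA.
have -> : \sum_(i in A) \sum_(j in A :\ i) g i j = X + X.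
  rewrite {2}X_gt /X -big_split /=; apply: eq_bigr => i iA.
  rewrite [LHS](bigID (fun j : 'I_n => (i < j)%N)) /=.
  by congr (_ + _); apply: eq_bigl => j; rewrite in_setD1 -(inj_eq val_inj) /=;
    case: ltngtP; rewrite ?andbT ?andbF.
by rewrite -mulr2n -scaler_nat scalerA mulVf ?pnatr_eq0 // scale1r.
Qed.

Section PointwiseLinear.
Variables (R : pzRingType) (T : Type) (V : lmodType R).
Implicit Type O : (T -> V) -> T -> V.

Definition linop (O : (T -> V) -> T -> V) := forall (c : R) (F G : T -> V),
  O (fun b => c *: F b + G b) = (fun b => c *: O F b + O G b).

Lemma linop0 O : linop O -> O (fun _ => 0) = (fun _ => 0).
Proof.
move=> lO; have := lO 1 (fun _ => 0) (fun _ => 0).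
have -> : (fun b : T => 1 *: (0 : V) + 0) = (fun _ => 0).
  by apply: functional_extensionality => b; rewrite scaler0 addr0.
move=> O0; apply: functional_extensionality => b.
have /= := congr1 (fun f => f b) O0; rewrite scale1r -[X in X = _]addr0.
by move=> /addrI.
Qed.

Lemma linopD O : linop O -> forall F G,
  O (fun b => F b + G b) = (fun b => O F b + O G b).
Proof.
move=> lO F G; have := lO 1 F G.
have -> : (fun b => 1 *: F b + G b) = (fun b => F b + G b).
  by apply: functional_extensionality => b; rewrite scale1r.
move=> ->; apply: functional_extensionality => b; by rewrite scale1r.
Qed.

Lemma linopZ O : linop O -> forall c F,
  O (fun b => c *: F b) = (fun b => c *: O F b).
Proof.
move=> lO c F; have := lO c F (fun _ => 0).
have -> : (fun b => c *: F b + 0) = (fun b => c *: F b).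
  by apply: functional_extensionality => b; rewrite addr0.
move=> ->; rewrite linop0 //; apply: functional_extensionality => b; by rewrite addr0.
Qed.

Lemma linop_sum O : linop O -> forall (I : Type) (r : seq I) (P : pred I) (h : I -> T -> V),
  O (fun b => \sum_(t <- r | P t) h t b) = (fun b => \sum_(t <- r | P t) O (h t) b).
Proof.
move=> lO I r P h; elim: r => [|x r IH].
  have -> : (fun b => \sum_(t <- [::] | P t) h t b) = (fun _ => 0 : V).
    by apply: functional_extensionality => b; rewrite big_nil.
  rewrite linop0 //; apply: functional_extensionality => b; by rewrite big_nil.
case Px: (P x).
  have -> : (fun b => \sum_(t <- x :: r | P t) h t b) =
            (fun b => h x b + \sum_(t <- r | P t) h t b).
    by apply: functional_extensionality => b; rewrite big_cons Px.
  rewrite linopD // IH; apply: functional_extensionality => b; by rewrite big_cons Px.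
have -> : (fun b => \sum_(t <- x :: r | P t) h t b) =
          (fun b => \sum_(t <- r | P t) h t b).
  by apply: functional_extensionality => b; rewrite big_cons Px.
rewrite IH; apply: functional_extensionality => b; by rewrite big_cons Px.
Qed.

End PointwiseLinear.

Section MultiIndexUpdate.
Variable n : nat.
Implicit Types (i j : 'I_n) (a : midx n).

Lemma updE i a k j : upd i a k j = if j == i then k else a j.
Proof. by rewrite ffunE. Qed.

Lemma upd_eq i a k : upd i a k i = k.
Proof. by rewrite updE eqxx. Qed.

Lemma upd_neq i j a k : j != i -> upd i a k j = a j.
Proof. by move=> ji; rewrite updE (negbTE ji). Qed.

Lemma upd_id i a : upd i a (a i) = a.
Proof. by apply/ffunP => j; rewrite updE; case: eqP => // ->. Qed.

Lemma upd_upd i a k k' : upd i (upd i a k) k' = upd i a k'.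
Proof. by apply/ffunP => j; rewrite !updE; case: eqP. Qed.

Lemma updC i j a k k' : i != j -> upd i (upd j a k) k' = upd j (upd i a k') k.
Proof.
move=> ij; apply/ffunP => l; rewrite !updE.
by case: (eqVneq l i) => [->|//]; rewrite (negbTE ij).
Qed.

Lemma sum_upd_notin (D : {set 'I_n}) i a k : i \notin D ->
  (\sum_(j in D) upd i a k j = \sum_(j in D) a j)%N.
Proof.
move=> iD; apply: eq_bigr => j jD; rewrite upd_neq //.
by apply: contraNneq iD => <-.
Qed.

End MultiIndexUpdate.

Section DunklOperators.
Variables (R : realFieldType) (n : nat) (V : lmodType R) (mu : 'I_n -> R).
Local Notation PV := (PV n V).
Local Notation linop := (@linop R (midx n) V).
Implicit Types (i j k : 'I_n) (H : PV) (D : {set 'I_n}).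

Definition dunkl_coef i (k : nat) : R := k.+1%:R + mu i * (1 - (-1) ^+ k.+1).

Lemma TopE i H a : Top mu i H a = dunkl_coef i (a i) *: H (upd i a (a i).+1).
Proof.
rewrite /Top /dop /divx /rop upd_eq /dunkl_coef.
by rewrite -{2}(scale1r (H _)) -scalerBl scalerA -scalerDl mulrC.
Qed.

Lemma dunkl_coefE i (k : nat) :
  dunkl_coef i k = (if (0 < k)%N then dunkl_coef i k.-1 else 0) + 1 + 2 * mu i * (-1) ^+ k.
Proof. by rewrite /dunkl_coef; case: k => [|k] /=; rewrite !exprS ?expr0 ?expr1; ring. Qed.

Lemma linop_xop i : linop (xop i).
Proof.
move=> c F G; apply: functional_extensionality => b; rewrite /xop.
by case: ifP => _; rewrite ?scaler0 ?addr0.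
Qed.

Lemma linop_Top i : linop (Top mu i).
Proof.
move=> c F G; apply: functional_extensionality => b.
by rewrite !TopE scalerDr !scalerA mulrC.
Qed.

Lemma xopC i j H : xop i (xop j H) = xop j (xop i H).
Proof.
apply: functional_extensionality => b; rewrite /xop.
case: (eqVneq i j) => [->//|ij].
rewrite (@upd_neq _ i j) 1?eq_sym // (@upd_neq _ j i) //.
by case: (0 < b i)%N; case: (0 < b j)%N => //; rewrite updC // eq_sym.
Qed.

Lemma Top_xopC i j H : i != j -> Top mu j (xop i H) = xop i (Top mu j H).
Proof.
move=> ij; apply: functional_extensionality => b; rewrite /xop !TopE.
rewrite upd_neq // upd_neq 1?eq_sym //.
case: ifP => _; last by rewrite scaler0.
by rewrite updC // upd_neq // eq_sym.
Qed.

Lemma Top_xop i H b :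
  Top mu i (xop i H) b = xop i (Top mu i H) b + (H b + (2 * mu i) *: rop i H b).
Proof.
rewrite TopE {1}/xop upd_eq ltn0Sn upd_upd upd_id /rop.
rewrite {1}dunkl_coefE !scalerDl scale1r -scalerA addrA; congr (_ + _ + _).
rewrite /xop; case: ifP => bi; last by rewrite scale0r.
by rewrite TopE upd_eq prednK // upd_upd upd_id.
Qed.

Lemma rop_xop k i H : k != i -> rop k (xop i H) = xop i (rop k H).
Proof.
move=> ki; apply: functional_extensionality => b; rewrite /rop /xop.
by case: ifP => _; rewrite ?scaler0 ?upd_neq.
Qed.

Lemma rop_Top k i H : k != i -> rop k (Top mu i H) = Top mu i (rop k H).
Proof.
move=> ki; apply: functional_extensionality => b.
by rewrite /rop !TopE upd_neq // !scalerA mulrC.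
Qed.

Lemma rA_xop D k H : k \notin D -> rA D (xop k H) = xop k (rA D H).
Proof.
move=> kD; apply: functional_extensionality => b; rewrite /rA /xop.
by case: ifP => _; rewrite ?scaler0 ?sum_upd_notin.
Qed.

Lemma rA_Top D k H : k \notin D -> rA D (Top mu k H) = Top mu k (rA D H).
Proof.
move=> kD; apply: functional_extensionality => b.
by rewrite /rA !TopE sum_upd_notin // !scalerA mulrC.
Qed.

Lemma rop_rA1 i H : rop i H = rA [set i] H.
Proof. by apply: functional_extensionality => b; rewrite /rA /rop big_set1. Qed.

Lemma rop_rA D i H : i \in D -> rop i (rA D H) = rA (D :\ i) H.
Proof.
move=> iD; apply: functional_extensionality => b; rewrite /rop /rA scalerA.
rewrite (big_setD1 i iD) /= exprD mulrA -exprD addnn.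
by rewrite -signr_odd odd_double expr0 mul1r.
Qed.

Lemma rA_rA_setD2 D i j H : i \in D -> j \in D :\ i ->
  rA [set i; j] (rA (D :\ i :\ j) H) = rA D H.
Proof.
move=> iD jD; apply: functional_extensionality => b; rewrite /rA scalerA.
have ij : i \notin [set j].
  by rewrite in_set1; move: jD; rewrite in_setD1 eq_sym => /andP [].
rewrite big_setU1 //= big_set1 (big_setD1 i iD) (big_setD1 j jD) /=.
by rewrite -exprD addnA.
Qed.

End DunklOperators.

Section CliffordDunkl.
Variables (R : realFieldType) (n : nat) (V : lmodType R) (mu : 'I_n -> R).
Variable e : 'I_n -> {linear V -> V}.
Hypothesis cliff : forall (i j : 'I_n) (v : V),
  e i (e j v) + e j (e i v) = (if i == j then - 2 else 0) *: v.

Local Notation PV := (PV n V).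
Local Notation linop := (@linop R (midx n) V).
Local Notation E := (fun i => (e i : V -> V)).
Local Notation SA := (SA mu E).
Implicit Types (i j k l : 'I_n) (H G : PV) (b : midx n) (A B C D : {set 'I_n}).

Lemma e_sq i (v : V) : e i (e i v) = - v.
Proof.
have two_neq0 : (2 : R) != 0 by rewrite pnatr_eq0.
apply: (scalerI two_neq0); have := cliff i i v; rewrite eqxx.
by rewrite scalerN -scaleNr -mulr2n -scaler_nat => ->.
Qed.

Lemma e_anticomm i j (v : V) : i != j -> e j (e i v) = - e i (e j v).
Proof.
move=> ij; have := cliff i j v; rewrite (negbTE ij) scale0r => h.
by apply/eqP; rewrite -addr_eq0 addrC h.
Qed.

Lemma linop_eop i : linop (eop E i).
Proof.
move=> c F G; apply: functional_extensionality => b.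
by rewrite /eop linearD linearZ.
Qed.

Lemma xop_eop i j H : xop i (eop E j H) = eop E j (xop i H).
Proof.
apply: functional_extensionality => b; rewrite /xop /eop.
by case: ifP => _; rewrite ?linear0.
Qed.

Lemma Top_eop i j H : Top mu i (eop E j H) = eop E j (Top mu i H).
Proof. by apply: functional_extensionality => b; rewrite /eop !TopE linearZ. Qed.

Lemma rop_eop i j H : rop i (eop E j H) = eop E j (rop i H).
Proof. by apply: functional_extensionality => b; rewrite /rop /eop linearZ. Qed.

Lemma rA_eop D j H : rA D (eop E j H) = eop E j (rA D H).
Proof. by apply: functional_extensionality => b; rewrite /rA /eop linearZ. Qed.

Definition mur k H b : V := mu k *: rop k H b.
Definition exT i j H b : V := e i (e j (xop i (Top mu j H) b)).
Definition mur_sum B H b : V := \sum_(k in B) mur k H b.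
Definition exT_sum B H b : V := \sum_(k in B) \sum_(l in B :\ k) exT k l H b.

Lemma exT_eop i j H : exT i j H = eop E i (eop E j (xop i (Top mu j H))).
Proof. by []. Qed.

Lemma linop_exT i j : linop (exT i j).
Proof.
rewrite /linop => c F G; rewrite !exT_eop.
by rewrite linop_Top (linop_xop i) (linop_eop j) (linop_eop i).
Qed.

Lemma xA_DA B H b :
  xA E B (DA mu E B H) b = \sum_(i in B) \sum_(j in B) e i (e j (xop i (Top mu j H) b)).
Proof.
rewrite /xA /DA /eop; apply: eq_bigr => i _.
rewrite (linop_sum (linop_xop i)) linear_sum; apply: eq_bigr => j _.
by rewrite (xop_eop i j).
Qed.

Lemma DA_xA B H b :
  DA mu E B (xA E B H) b = \sum_(i in B) \sum_(j in B) e j (e i (Top mu j (xop i H) b)).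
Proof.
rewrite /xA /DA exchange_big /=; apply: eq_bigr => j _.
rewrite /eop (linop_sum (linop_Top mu j)) linear_sum; apply: eq_bigr => i _.
by rewrite (Top_eop j i).
Qed.

Lemma commutator_term i j H b :
  e i (e j (xop i (Top mu j H) b)) - e j (e i (Top mu j (xop i H) b)) =
  if i == j then H b + 2 *: mur i H b else 2 *: exT i j H b.
Proof.
case: (eqVneq i j) => [<-|ij].
  by rewrite Top_xop !linearD /= addNKr !e_sq !opprK -scalerA.
by rewrite Top_xopC // (e_anticomm _ ij) opprK -mulr2n -scaler_nat.
Qed.

Lemma SAE B H b :
  SA B H b = ((#|B|%:R - 1) / 2) *: H b + mur_sum B H b + exT_sum B H b.
Proof.
rewrite /Defs.SA xA_DA DA_xA -sumrB.
have row_sum i : i \in B ->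
    \sum_(j in B) e i (e j (xop i (Top mu j H) b)) -
    \sum_(j in B) e j (e i (Top mu j (xop i H) b)) =
    (H b + 2 *: mur i H b) + 2 *: \sum_(j in B :\ i) exT i j H b.
  move=> iB; rewrite -sumrB (bigD1 i iB) /= commutator_term eqxx; congr (_ + _).
  rewrite scaler_sumr; apply: eq_big => [j|j /andP [_ ji]].
    by rewrite in_setD1 andbC.
  by rewrite commutator_term eq_sym (negbTE ji).
rewrite (eq_bigr _ row_sum) !big_split /= sumr_const -!scaler_sumr.
rewrite -/(mur_sum B H b) -/(exT_sum B H b) -scaler_nat.
rewrite scalerBr !scalerDr !scalerA mulVf ?pnatr_eq0 // !scale1r.
by rewrite mulrBl mul1r scalerBl (mulrC _ #|B|%:R) addrAC (addrAC _ (mur_sum B H b)).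
Qed.

Lemma rA_mur D k H : rA D (mur k H) = mur k (rA D H).
Proof.
apply: functional_extensionality => b; rewrite /rA /mur /rop.
by rewrite !scalerA; congr (_ *: _); ring.
Qed.

Lemma rA_exT D k l H : k \notin D -> l \notin D -> rA D (exT k l H) = exT k l (rA D H).
Proof. by move=> kD lD; rewrite !exT_eop !rA_eop rA_xop // rA_Top. Qed.

Lemma rA_SA D B H : [disjoint B & D] -> rA D (SA B H) = SA B (rA D H).
Proof.
move=> BD; have notD k : k \in B -> k \notin D by move=> kB; rewrite (disjointFr BD).
apply: functional_extensionality => b.
rewrite SAE {1}/rA SAE !scalerDr; congr (_ + _ + _).
- by rewrite /rA !scalerA mulrC.
- by rewrite /mur_sum scaler_sumr; apply: eq_bigr => k _; rewrite -rA_mur.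
rewrite /exT_sum scaler_sumr; apply: eq_bigr => k kB.
rewrite scaler_sumr; apply: eq_bigr => l; rewrite in_setD1 => /andP [_ lB].
by rewrite -rA_exT ?notD.
Qed.

Lemma rop_SA i B H : i \notin B -> rop i (SA B H) = SA B (rop i H).
Proof. by move=> iB; rewrite !rop_rA1 rA_SA // disjoint_sym disjoints1. Qed.

Lemma mur_exT k i j H : k != i -> k != j -> mur k (exT i j H) = exT i j (mur k H).
Proof.
move=> ki kj; rewrite /mur (linopZ (linop_exT i j)) !exT_eop.
by rewrite !rop_eop rop_xop // rop_Top.
Qed.

Lemma exT_exT_swap i j k l H b :
  i != j -> i != k -> j != k ->
  exT i j (exT k l H) b + exT k j (exT i l H) b = 0.
Proof.
move=> ij ik jk; rewrite [exT k l H]exT_eop [exT i l H]exT_eop /exT.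
rewrite !Top_eop !xop_eop /eop Top_xopC 1?eq_sym // Top_xopC // (xopC k i).
rewrite (e_anticomm _ jk) (e_anticomm _ ik) linearN /= (e_anticomm _ ij).
by rewrite !opprK subrr.
Qed.


Definition mur_coef k b : R := mu k * (-1) ^+ b k.

Lemma murE k H b : mur k H b = mur_coef k b *: H b.
Proof. by rewrite /mur /rop scalerA. Qed.

Lemma mur_sumE B H b : mur_sum B H b = \sum_(k in B) mur_coef k b *: H b.
Proof. by apply: eq_bigr => k _; rewrite murE. Qed.

Lemma SA_pair i j H b : i != j ->
  SA [set i; j] H b = 2^-1 *: H b + mur i H b + mur j H b + exT i j H b + exT j i H b.
Proof.
move=> ij; have i_notin_j : i \notin [set j] by rewrite in_set1.
rewrite SAE cards2 ij /mur_sum /exT_sum !big_setU1 //= !big_set1 setU1K //.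
rewrite (setUC [set i]) setU1K 1?in_set1 1?eq_sym // !big_set1.
by rewrite -[2%N]/(1 + 1)%N natrD addrK mul1r !addrA.
Qed.

Lemma GammaA_pair A i j (F : PV) : i \in A -> j \in A :\ i ->
  GammaA mu E [set i; j] (GammaA mu E (A :\ i :\ j) F) = SA [set i; j] (SA (A :\ i :\ j) (rA A F)).
Proof.
move=> iA jA; rewrite /GammaA rA_SA ?rA_rA_setD2 //.
rewrite -setI_eq0; apply/eqP/setP => k; rewrite !inE.
by case: (k == i); case: (k == j); rewrite ?andbF.
Qed.

Lemma GammaA_setD1 A i (F : PV) : i \in A -> GammaA mu E (A :\ i) F = rop i (SA (A :\ i) (rA A F)).
Proof. by move=> iA; rewrite /GammaA rop_SA ?setD11 // rop_rA. Qed.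

Lemma sum_SA_setD1 B H b :
  \sum_(j in B) SA (B :\ j) H b =
  ((#|B|%:R * (#|B|%:R - 2)) / 2) *: H b + (#|B|%:R - 1) *: mur_sum B H b
  + (#|B|%:R - 2) *: exT_sum B H b.
Proof.
rewrite (eq_bigr (fun j => ((#|B|%:R - 2) / 2) *: H b + mur_sum (B :\ j) H b
                          + exT_sum (B :\ j) H b)); last first.
  move=> j jB; rewrite SAE natr_cardsD1 //.
  by congr (_ *: _ + _ + _); congr (_ / _); ring.
rewrite !big_split /= sumr_const -scaler_nat scalerA mulrA.
by rewrite /mur_sum /exT_sum sum_setD1_const sum_setD2_const.
Qed.

Definition mur_mur_sum A H b : V := \sum_(i in A) mur_coef i b *: mur_sum (A :\ i) H b.
Definition mur_exT_sum A H b : V := \sum_(i in A) mur_coef i b *: exT_sum (A :\ i) H b.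

Definition expansion A H b : R -> R -> R -> R -> R -> V :=
  lincomb5 (H b) (mur_sum A H b) (exT_sum A H b) (mur_mur_sum A H b) (mur_exT_sum A H b).

Lemma SA_expansion A H b :
  SA A H b = expansion A H b ((#|A|%:R - 1) / 2) 1 1 0 0.
Proof. by rewrite SAE /expansion /lincomb5 !scale0r !addr0 !scale1r. Qed.

Lemma sum2_SA A H b :
  \sum_(i in A) \sum_(j in A :\ i) SA (A :\ i :\ j) H b =
  expansion A H b ((#|A|%:R * (#|A|%:R - 1) * (#|A|%:R - 3)) / 2)
    ((#|A|%:R - 1) * (#|A|%:R - 2)) ((#|A|%:R - 2) * (#|A|%:R - 3)) 0 0.
Proof.
rewrite (eq_bigr (fun i => (((#|A|%:R - 1) * (#|A|%:R - 3)) / 2) *: H b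
    + (#|A|%:R - 2) *: mur_sum (A :\ i) H b
    + (#|A|%:R - 3) *: exT_sum (A :\ i) H b)); last first.
  move=> i iA; rewrite sum_SA_setD1 natr_cardsD1 //.
  by congr (_ *: _ + _ *: _ + _ *: _); ring.
rewrite !big_split /= sumr_const -scaler_nat -!scaler_sumr.
rewrite /mur_sum /exT_sum sum_setD1_const sum_setD2_const.
rewrite /expansion /lincomb5 !scale0r !addr0 !scalerA.
by congr (_ *: _ + _ *: _ + _ *: _); ring.
Qed.

Lemma sum2_mur_SA A H b :
  \sum_(i in A) \sum_(j in A :\ i) mur i (SA (A :\ i :\ j) H) b =
  expansion A H b 0 (((#|A|%:R - 1) * (#|A|%:R - 3)) / 2) 0 (#|A|%:R - 2) (#|A|%:R - 3).
Proof.
rewrite (eq_bigr (fun i => (((#|A|%:R - 1) * (#|A|%:R - 3)) / 2) *: (mur_coef i b *: H b)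
    + (#|A|%:R - 2) *: (mur_coef i b *: mur_sum (A :\ i) H b)
    + (#|A|%:R - 3) *: (mur_coef i b *: exT_sum (A :\ i) H b))); last first.
  move=> i iA; under eq_bigr => j _ do rewrite murE.
  rewrite -scaler_sumr sum_SA_setD1 natr_cardsD1 // !scalerDr !scalerA.
  by congr (_ *: _ + _ *: _ + _ *: _); ring.
rewrite !big_split /= -!scaler_sumr -mur_sumE.
by rewrite /expansion /lincomb5 !scale0r add0r addr0.
Qed.

Lemma sum_mur_SA A H b :
  \sum_(i in A) mur i (SA (A :\ i) H) b = expansion A H b 0 ((#|A|%:R - 2) / 2) 0 1 1.
Proof.
rewrite (eq_bigr (fun i => ((#|A|%:R - 2) / 2) *: (mur_coef i b *: H b)
    + mur_coef i b *: mur_sum (A :\ i) H b + mur_coef i b *: exT_sum (A :\ i) H b)).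
  by rewrite !big_split /= -scaler_sumr -mur_sumE /expansion /lincomb5 !scale0r add0r addr0 !scale1r.
move=> i iA; rewrite murE SAE natr_cardsD1 // !scalerDr !scalerA.
by congr (_ *: _ + _ + _); ring.
Qed.

Lemma exT_SA i j C H b : i \notin C -> j \notin C ->
  exT i j (SA C H) b =
  ((#|C|%:R - 1) / 2) *: exT i j H b + \sum_(k in C) mur_coef k b *: exT i j H b
  + \sum_(k in C) \sum_(l in C :\ k) exT i j (exT k l H) b.
Proof.
move=> iC jC.
have -> : SA C H = fun b => ((#|C|%:R - 1) / 2) *: H b + mur_sum C H b + exT_sum C H b.
  by apply: functional_extensionality => b'; rewrite SAE.
rewrite !(linopD (linop_exT i j)) (linopZ (linop_exT i j)); congr (_ + _ + _).
  rewrite /mur_sum (linop_sum (linop_exT i j)); apply: eq_bigr => k kC.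
  have k_neq x : x \notin C -> k != x by apply: contraNneq => <-.
  by rewrite -mur_exT ?murE ?k_neq.
rewrite /exT_sum (linop_sum (linop_exT i j)); apply: eq_bigr => k kC.
by rewrite (linop_sum (linop_exT i j)).
Qed.

Lemma sum_exT_exT A H b :
  \sum_(i in A) \sum_(j in A :\ i) \sum_(k in A :\ i :\ j)
    \sum_(l in A :\ i :\ j :\ k) exT i j (exT k l H) b = 0.
Proof.
set Z := \sum_(i in A) _.
have swap_ik : Z = \sum_(i in A) \sum_(j in A :\ i) \sum_(k in A :\ i :\ j)
    \sum_(l in A :\ i :\ j :\ k) exT k j (exT i l H) b.
  rewrite /Z; under eq_bigr => i _ do rewrite (sum_setD1_swap _ (fun j k => _)).
  rewrite -(sum_setD2_swap _ (fun i k C => \sum_(j in C) _)).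
  under eq_bigr => i _ do rewrite (sum_setD1_swap _ (fun j k => _)).
  apply: eq_bigr => i _; apply: eq_bigr => j _; apply: eq_bigr => k _.
  by rewrite (setD1C (A :\ k) j i) (setD1C A k i) (setD1C (A :\ i) k j).
have : Z + Z = 0.
  rewrite {2}swap_ik /Z -big_split big1 // => i iA.
  rewrite -big_split big1 // => j; rewrite in_setD1 => /andP [ji _].
  rewrite -big_split big1 // => k; rewrite !in_setD1 => /andP [kj /andP [ki _]].
  by rewrite -big_split big1 // => l _; apply: exT_exT_swap; rewrite // eq_sym.
by move/eqP; rewrite -mulr2n -scaler_nat scaler_eq0 pnatr_eq0 /= => /eqP.
Qed.

Lemma sum2_exT_SA A H b :
  \sum_(i in A) \sum_(j in A :\ i) exT i j (SA (A :\ i :\ j) H) b =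
  expansion A H b 0 0 ((#|A|%:R - 3) / 2) 0 1.
Proof.
rewrite (eq_bigr (fun i => \sum_(j in A :\ i)
   (((#|A|%:R - 3) / 2) *: exT i j H b
    + \sum_(k in A :\ i :\ j) mur_coef k b *: exT i j H b
    + \sum_(k in A :\ i :\ j) \sum_(l in A :\ i :\ j :\ k) exT i j (exT k l H) b))).
  under eq_bigr => i _ do rewrite !big_split /=.
  rewrite !big_split /= sum_exT_exT addr0 /expansion /lincomb5 !scale0r !add0r addr0 scale1r.
  congr (_ + _).
    by rewrite /exT_sum scaler_sumr; apply: eq_bigr => i _; rewrite scaler_sumr.
  under eq_bigr => i _ do rewrite (sum_setD1_swap _ (fun j k => _)).
  rewrite (sum_setD2_swap _ (fun i j C => \sum_(k in C) _)) /mur_exT_sum /exT_sum.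
  apply: eq_bigr => i _; rewrite scaler_sumr; apply: eq_bigr => j _.
  by rewrite scaler_sumr.
move=> i iA; apply: eq_bigr => j jA.
rewrite exT_SA ?in_setD1 ?eqxx ?andbF // !natr_cardsD1 //.
by congr (_ *: _ + _ + _); congr (_ / _); ring.
Qed.

Lemma sum2_SA_pair A H b :
  \sum_(i in A) \sum_(j in A :\ i) SA [set i; j] (SA (A :\ i :\ j) H) b =
  expansion A H b (#|A|%:R * (#|A|%:R - 1) * (#|A|%:R - 3) / 4)
    ((#|A|%:R - 1) * (3 * #|A|%:R - 8) / 2) (#|A|%:R * (#|A|%:R - 3) / 2)
    (2 * (#|A|%:R - 2)) (2 * (#|A|%:R - 2)).
Proof.
rewrite (eq_bigr (fun i => \sum_(j in A :\ i)
   (2^-1 *: SA (A :\ i :\ j) H b + mur i (SA (A :\ i :\ j) H) b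
    + mur j (SA (A :\ i :\ j) H) b + exT i j (SA (A :\ i :\ j) H) b
    + exT j i (SA (A :\ i :\ j) H) b))); last first.
  move=> i iA; apply: eq_bigr => j; rewrite in_setD1 eq_sym => /andP [ij _].
  exact: SA_pair.
under eq_bigr => i _ do rewrite !big_split /= -scaler_sumr.
rewrite !big_split /= -scaler_sumr.
rewrite (sum_setD2_swap _ (fun x y C => mur x (SA C H) b)).
rewrite (sum_setD2_swap _ (fun x y C => exT x y (SA C H) b)).
rewrite sum2_SA sum2_mur_SA sum2_exT_SA /expansion !(lincomb5Z, lincomb5D).
by congr lincomb5; field.
Qed.

End CliffordDunkl.

Theorem lemma12 (R : realFieldType) (n : nat) (V : lmodType R)
  (mu : 'I_n -> R) (e : 'I_n -> {linear V -> V})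
  (mu_pos : forall i, 0 < mu i)
  (cliff : forall (i j : 'I_n) (v : V),
      e i (e j v) + e j (e i v) = (if i == j then - 2 else 0) *: v)
  (A : {set 'I_n}) (F : PV n V) (hF : is_poly F) :
  CA mu (fun i => e i) A F
  = (fun a => (#|A|%:R * (#|A|%:R - 3) / 4) *: GammaA mu (fun i => e i) A F a).
Proof.
apply: functional_extensionality => a; rewrite /CA sum_ord_pairs; last first.
  by move=> i j; rewrite setUC setD1C.
under eq_bigr => i iA do under eq_bigr => j jA do rewrite (GammaA_pair _ cliff) //.
rewrite (sum2_SA_pair _ cliff).
under eq_bigr => i iA do rewrite (GammaA_setD1 _ cliff) //.
rewrite (sum_mur_SA _ cliff) /GammaA (SA_expansion _ cliff) /expansion.
rewrite !(lincomb5Z, lincomb5N, lincomb5D).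
by congr lincomb5; field.
Qed.
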